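(* Fix $\tilde r^2>0$, $\tilde\sigma^2>0$ (an observational family) and $\gamma\in(0,\infty)$. Then the optimal causal regularization $\lambda_C(\gamma)$ depends on the causal model only through its confounding strength $\zeta$. With $$\rho(\gamma,\mathrm{SNR}_{\rm stat})=-\mathrm{SNR}_{\rm stat}^{-1}\frac{\gamma\max\{1,\gamma\}}{(1-\gamma)^2}$$ (interpreted as $-\infty$ when $\gamma=1$), the following hold: - if $\zeta\le\rho(\gamma,\mathrm{SNR}_{\rm stat})$, then $\lambda_C=0$; - if $\rho(\gamma,\mathrm{SNR}_{\rm stat})<\zeta<1$, then $\lambda_C\in(0,\infty)$ and $\lambda_C$ is a differentiable function of $\zeta$ with $\partial_\zeta\lambda_C(\gamma)>0$; - if $\zeta\ge1$, then $\lambda_C=\infty$.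
   Context: Setting: isotropic linear causal models $z\sim\mathcal N(0,I_l)$, $\varepsilon\sim\mathcal N(0,\sigma^2)$, $x=Mz$ with $MM^T=I_d$, and $y=x^T\beta+z^T\alpha+\varepsilon$. Write $\Gamma=M\alpha$, $\tilde\beta=\beta+\Gamma$ and $\tilde\sigma^2=\sigma^2+\|\alpha\|^2-\|\Gamma\|^2$. Asymptotically the model is summarized by constants $\|\beta\|^2=r^2$, $\|\Gamma\|^2=\omega^2$, $\langle\Gamma,\beta\rangle=\eta$ and $\tilde\sigma^2$, with $\tilde r^2=r^2+\omega^2+2\eta$. Observational family: models entailing the same observational distribution share $\tilde r^2$ and $\tilde\sigma^2$, while $(\omega^2,\eta)$ vary. Derived quantities: confounding strength $\zeta=(\omega^2+\eta)/\tilde r^2$ and $\mathrm{SNR}_{\rm stat}=\tilde r^2/\tilde\sigma^2$. Limiting causal risk of ridge regression with parameter $\lambda>0$ at ratio $\gamma=\lim d/n$: $$\mathcal R_\lambda(\gamma)=\omega^2+\tilde r^2\lambda^2m'(-\lambda)-2(\omega^2+\eta)\lambda m(-\lambda)+\tilde\sigma^2\gamma\big(m(-\lambda)-\lambda m'(-\lambda)\big)+\tilde\sigma^2+\omega^2,$$ where $m(z)=\frac{(1-\gamma-z)-\sqrt{(1-\gamma-z)^2-4\gamma z}}{2\gamma z}$ and $m'$ is its derivative. Optimal causal regularization: $\lambda_C(\gamma)=\arg\inf_{\lambda\in(0,\infty)}\mathcal R_\lambda(\gamma)$. By convention $\lambda_C=0$ if the infimum is attained only as $\lambda\to0^+$,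 and $\lambda_C=\infty$ if it is attained only as $\lambda\to\infty$. *)

From Stdlib Require Import Reals.
From Coquelicot Require Import Coquelicot.
Open Scope R_scope.

(* Stieltjes transform of the Marchenko-Pastur law with ratio g (used for z < 0):
   m(z) = ((1-g-z) - sqrt((1-g-z)^2 - 4 g z)) / (2 g z). *)
Definition mp_m (g z : R) : R :=
  ((1 - g - z) - sqrt ((1 - g - z)^2 - 4 * g * z)) / (2 * g * z).

(* Limiting causal risk of ridge regression with parameter lam at ratio g,
   with rt2 = tilde r^2, st2 = tilde sigma^2, om2 = omega^2, eta = <Gamma,beta>.
   m'(-lam) is the (Coquelicot) derivative of z |-> m(z) at z = -lam. *)
Definition causal_risk (rt2 st2 om2 eta g lam : R) : R :=
  om2 + rt2 * lam^2 * Derive (mp_m g) (- lam)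
  - 2 * (om2 + eta) * lam * mp_m g (- lam)
  + st2 * g * (mp_m g (- lam) - lam * Derive (mp_m g) (- lam))
  + st2 + om2.

(* "lamC is the optimal causal regularization" for a risk function Rf on (0,oo),
   with the conventions: lamC = 0 iff the infimum is attained only as lam -> 0+,
   lamC = +oo iff it is attained only as lam -> oo; otherwise lamC is the
   (unique) minimizer in (0,oo). *)
Definition is_opt_reg (Rf : R -> R) (lamC : Rbar) : Prop :=
  match lamC with
  | Finite l =>
      if Req_EM_T l 0 then
        exists L : R, (forall mu, 0 < mu -> L < Rf mu) /\
                      filterlim Rf (at_right 0) (locally L)
      else
        0 < l /\ (forall mu, 0 < mu -> Rf l <= Rf mu) /\
        (forall mu, 0 < mu -> (forall nu, 0 < nu -> Rf mu <= Rf nu) -> mu = l)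
  | p_infty =>
      exists L : R, (forall mu, 0 < mu -> L < Rf mu) /\
                    filterlim Rf (Rbar_locally p_infty) (locally L)
  | m_infty => False
  end.

Definition opt_causal_reg (rt2 st2 om2 eta g : R) (lamC : Rbar) : Prop :=
  is_opt_reg (causal_risk rt2 st2 om2 eta g) lamC.

(* Asymptotic constants realizable by a causal model in the observational family
   with tilde r^2 = rt2: omega^2 >= 0, r^2 = rt2 - omega^2 - 2 eta >= 0 and
   Cauchy-Schwarz eta^2 <= r^2 omega^2. *)
Definition admissible (rt2 om2 eta : R) : Prop :=
  0 <= om2 /\ 0 <= rt2 - om2 - 2 * eta /\ eta^2 <= (rt2 - om2 - 2 * eta) * om2.

Definition conf_strength (rt2 om2 eta : R) : R := (om2 + eta) / rt2.
Definition snr_stat (rt2 st2 : R) : R := rt2 / st2.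

Definition rho (g snr : R) : Rbar :=
  if Req_EM_T g 1 then m_infty
  else Finite (- / snr * (g * Rmax 1 g / (1 - g)^2)).

(* Substitute p = m(-lam).  On (0, oo) the map lam |-> p is a decreasing bijection onto
   mp_range = {p > 0 | mpA p > 0}, with inverse lam_of_m p = mpA p / (p mpB p) and
   m'(-lam) = (p mpB p)^2 / mpE p.  In this coordinate the causal risk is a rational function
   risk_m with
     risk_m'(p) = 2 r~^2 / mpB(p)^2 * (zeta - crit_conf(p)),
   where crit_conf depends on the model only through s = sigma~^2 / r~^2 and decreases strictly
   from crit_conf(0) = 1 to rho at the far end of mp_range.  Hence for zeta <= rho the risk
   increases in lam, for zeta >= 1 it decreases, and in between it has the unique minimiser
   lam_C = lam_of_m (crit_conf^{-1} zeta); the inverse function rule gives lam_C' > 0, as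
   lam_of_m and crit_conf are both decreasing. *)

From Stdlib Require Import Reals Lra Classical ClassicalEpsilon Ranalysis5.
From Coquelicot Require Import Coquelicot.
Open Scope R_scope.

Lemma derive_neg_strict_decr (f df : R -> R) (a b : R) : a < b ->
  (forall x, a <= x <= b -> is_derive f x (df x)) ->
  (forall x, a < x < b -> df x < 0) -> f b < f a.
Proof.
  intros Hab Hd Hneg.
  destruct (MVT_cor2 f df a b Hab) as [c [Hc Hcab]].
  { intros c Hc. apply is_derive_Reals, Hd. lra. }
  pose proof (Hneg c Hcab). nra.
Qed.

Lemma derive_pos_strict_incr (f df : R -> R) (a b : R) : a < b ->
  (forall x, a <= x <= b -> is_derive f x (df x)) ->
  (forall x, a < x < b -> 0 < df x) -> f a < f b.
Proof.
  intros Hab Hd Hpos.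
  destruct (MVT_cor2 f df a b Hab) as [c [Hc Hcab]].
  { intros c Hc. apply is_derive_Reals, Hd. lra. }
  pose proof (Hpos c Hcab). nra.
Qed.

Lemma is_derive_continuity_pt (f : R -> R) (x l : R) :
  is_derive f x l -> continuity_pt f x.
Proof.
  intros H. apply is_derive_Reals in H.
  exact (derivable_continuous_pt f x (exist _ l H)).
Qed.

Lemma inf_pos_exists (f : R -> R) (m : R) : (forall x, 0 < x -> m <= f x) ->
  exists L, (forall x, 0 < x -> L <= f x) /\
            (forall eps, 0 < eps -> exists x, 0 < x /\ f x < L + eps).
Proof.
  intros Hm.
  set (E := fun y => exists x, 0 < x /\ y = - f x).
  assert (Hb : bound E).
  { exists (- m). intros y [x [Hx ->]]. specialize (Hm x Hx). lra. }
  assert (Hne : exists y, E y) by (exists (- f 1), 1; split; [lra|reflexivity]).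
  destruct (completeness E Hb Hne) as [l [Hub Hleast]].
  exists (- l). split.
  - intros x Hx. assert (HE : E (- f x)) by (exists x; auto).
    specialize (Hub _ HE). lra.
  - intros eps Heps. apply NNPP. intros Hno.
    assert (Hub' : is_upper_bound E (l - eps)).
    { intros y [x [Hx ->]].
      destruct (Rlt_or_le (f x) (- l + eps)); [exfalso; apply Hno; now exists x|lra]. }
    specialize (Hleast _ Hub'). lra.
Qed.

Lemma incr_bounded_lim_at_right0 (f : R -> R) (m : R) :
  (forall x y, 0 < x -> x < y -> f x < f y) -> (forall x, 0 < x -> m <= f x) ->
  exists L, (forall x, 0 < x -> L < f x) /\ filterlim f (at_right 0) (locally L).
Proof.
  intros Hincr Hm. destruct (inf_pos_exists f m Hm) as [L [HL Happrox]].
  exists L. split.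
  - intros x Hx. specialize (HL (x / 2) ltac:(lra)).
    specialize (Hincr (x / 2) x ltac:(lra) ltac:(lra)). lra.
  - apply filterlim_locally. intros eps.
    destruct (Happrox eps (cond_pos eps)) as [x0 [Hx0 Hfx0]].
    exists (mkposreal x0 Hx0). intros y Hy Hy0.
    change (Rabs (y - 0) < x0) in Hy. rewrite Rminus_0_r, Rabs_pos_eq in Hy by lra.
    change (Rabs (f y - L) < eps).
    specialize (HL y Hy0). specialize (Hincr y x0 Hy0 Hy).
    rewrite Rabs_pos_eq; lra.
Qed.

Lemma decr_bounded_lim_at_infty (f : R -> R) (m : R) :
  (forall x y, 0 < x -> x < y -> f y < f x) -> (forall x, 0 < x -> m <= f x) ->
  exists L, (forall x, 0 < x -> L < f x) /\ filterlim f (Rbar_locally p_infty) (locally L).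
Proof.
  intros Hdecr Hm. destruct (inf_pos_exists f m Hm) as [L [HL Happrox]].
  exists L. split.
  - intros x Hx. specialize (HL (x + 1) ltac:(lra)).
    specialize (Hdecr x (x + 1) ltac:(lra) ltac:(lra)). lra.
  - apply filterlim_locally. intros eps.
    destruct (Happrox eps (cond_pos eps)) as [x0 [Hx0 Hfx0]].
    exists x0. intros y Hy. change (Rabs (f y - L) < eps).
    specialize (HL y ltac:(lra)). specialize (Hdecr x0 y Hx0 Hy).
    rewrite Rabs_pos_eq; lra.
Qed.

(* Inverse function rule, reduced to Stdlib's increasing version by y |-> h (- y). *)
Lemma is_derive_inverse_decr (f h df : R -> R) (a b y : R) : a < b ->
  (forall x, a <= x <= b -> is_derive f x (df x)) ->
  (forall x1 x2, a <= x1 -> x1 < x2 -> x2 <= b -> f x2 < f x1) ->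
  (forall y', f b <= y' <= f a -> a <= h y' <= b /\ f (h y') = y') ->
  f b < y < f a -> df (h y) <> 0 ->
  is_derive h y (1 / df (h y)).
Proof.
  intros Hab Hd Hdecr Hinv Hy Hdf.
  set (F := fun x => - f x). set (H := fun y' => h (- y')).
  assert (HFH : forall y', F a <= y' <= F b -> a <= H y' <= b /\ F (H y') = y').
  { intros y' Hy'. unfold F, H in *. destruct (Hinv (- y')) as [Hr He]; [lra|].
    split; [exact Hr|lra]. }
  assert (HdF : forall x, a <= x <= b -> is_derive F x (- df x)).
  { intros x Hx. apply (is_derive_opp f), Hd, Hx. }
  assert (Hcont : continuity_pt H (- y)).
  { apply (continuity_pt_recip_interv F H a b Hab).
    - intros x1 x2 H1 H12 H2. unfold F. specialize (Hdecr x1 x2 H1 H12 H2). lra.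
    - intros x H1 H2. exact (proj2 (HFH x ltac:(lra))).
    - intros x H1 H2. exact (proj1 (HFH x ltac:(lra))).
    - intros x Hx. exact (is_derive_continuity_pt _ _ _ (HdF x Hx)).
    - unfold F. lra. }
  assert (Prf : forall x, H (F a) <= x <= H (F b) -> derivable_pt F x).
  { intros x Hx. exists (- df x). apply is_derive_Reals, HdF.
    pose proof (proj1 (HFH (F a) ltac:(unfold F; lra))).
    pose proof (proj1 (HFH (F b) ltac:(unfold F; lra))). lra. }
  assert (Hmono : forall u v, F a <= u -> u <= v -> v <= F b -> H u <= H v).
  { intros u v Hu Huv Hv. destruct (HFH u ltac:(lra)) as [Hru Heu].
    destruct (HFH v ltac:(lra)) as [Hrv Hev].
    destruct (Rle_or_lt (H u) (H v)) as [|Hlt]; [assumption|].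
    specialize (Hdecr (H v) (H u) ltac:(lra) Hlt ltac:(lra)). unfold F in Heu, Hev. lra. }
  assert (Hmid : H (F a) <= H (- y) <= H (F b)).
  { unfold F in *. split; apply Hmono; lra. }
  assert (HdF_y : derive_pt F (H (- y)) (Prf (H (- y)) Hmid) = - df (h y)).
  { apply derive_pt_eq_0, is_derive_Reals. unfold H. rewrite Ropp_involutive.
    apply HdF. apply (Hinv y). lra. }
  pose proof (derivable_pt_lim_recip_interv F H (F a) (F b) (- y) Prf Hcont
    ltac:(unfold F; lra) ltac:(unfold F; lra) Hmid
    ltac:(intros t Ht; exact (proj2 (HFH t Ht))) ltac:(rewrite HdF_y; lra)) as HdH.
  rewrite HdF_y in HdH. apply is_derive_Reals in HdH.
  apply (is_derive_ext (fun y' => H (- y'))); [intros t; unfold H; now rewrite Ropp_involutive|].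
  replace (1 / df (h y)) with (scal (-1) (1 / - df (h y))) by (unfold scal; simpl; unfold mult; simpl; field; exact Hdf).
  apply (is_derive_comp H Ropp); [exact HdH|].
  apply (is_derive_ext (fun t => - t)); [reflexivity|]. auto_derive; auto; ring.
Qed.

Definition mpA (g p : R) : R := 1 - (1 - g) * p.
Definition mpB (g p : R) : R := 1 + g * p.
Definition mpE (g p : R) : R := 1 + 2 * g * p - g * (1 - g) * p ^ 2.
Definition lam_of_m (g p : R) : R := mpA g p / (p * mpB g p).
Definition mp_range (g p : R) : Prop := 0 < p /\ 0 < mpA g p.

Lemma mpB_pos (g p : R) : 0 < g -> 0 <= p -> 0 < mpB g p.
Proof. intros. unfold mpB. nra. Qed.

Lemma mpE_pos (g p : R) : 0 < g -> 0 <= p -> 0 <= mpA g p -> 0 < mpE g p.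
Proof.
  intros Hg Hp HA.
  replace (mpE g p) with (1 + g * p + g * p * mpA g p) by (unfold mpE, mpA; ring).
  assert (0 <= g * p) by nra. assert (0 <= g * p * mpA g p) by nra. lra.
Qed.

Lemma mpA_between (g a b x : R) : a <= x <= b ->
  0 <= mpA g a -> 0 <= mpA g b -> 0 <= mpA g x.
Proof. intros Hx Ha Hb. unfold mpA in *. destruct (Rle_or_lt 0 (1 - g)); nra. Qed.

Lemma mp_range_between (g a b x : R) : mp_range g a -> mp_range g b -> a <= x <= b ->
  mp_range g x.
Proof. intros [Ha HAa] [_ HAb] Hx. split; [lra|]. unfold mpA in *. destruct (Rle_or_lt 0 (1 - g)); nra. Qed.

Section StieltjesTransform.

Variable g : R.
Hypothesis Hg : 0 < g.

Lemma is_derive_mp_m (z : R) : z < 0 ->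
  is_derive (mp_m g) z ((g * mp_m g z ^ 2 + mp_m g z) / sqrt ((1 - g - z) ^ 2 - 4 * g * z)).
Proof.
  intros Hz.
  assert (Hgz : 0 < g * - z) by nra.
  assert (HQ : 0 < (1 - g - z) ^ 2 - 4 * g * z) by (pose proof (pow2_ge_0 (1 - g - z)); lra).
  unfold mp_m. auto_derive.
  { split; [nra|split; [intros H; nra|auto]]. }
  replace ((1 - g + - z) * ((1 - g + - z) * 1) + - (4 * g * z))
    with ((1 - g - z) ^ 2 - 4 * g * z) by ring.
  set (Q := (1 - g - z) ^ 2 - 4 * g * z) in *.
  assert (HS2 : sqrt Q ^ 2 = Q) by (rewrite <- Rsqr_pow2; apply Rsqr_sqrt; lra).
  assert (HS : 0 < sqrt Q) by (apply sqrt_lt_R0; lra).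
  set (S := sqrt Q) in *.
  field_simplify; [|repeat split; intros H; nra..].
  rewrite HS2. unfold Q. field. repeat split; intros H; nra.
Qed.

Lemma mp_m_spec (l : R) : 0 < l ->
  let p := mp_m g (- l) in
  0 < p /\ mpA g p = l * p * mpB g p /\
  sqrt ((1 - g - - l) ^ 2 - 4 * g * - l) = (1 - g + l) + 2 * g * l * p.
Proof.
  intros Hl p.
  assert (Hgl : 0 < g * l) by nra.
  set (Q := (1 - g - - l) ^ 2 - 4 * g * - l).
  assert (HQ : Q = (1 - g + l) ^ 2 + 4 * g * l) by (unfold Q; ring).
  assert (HQ0 : 0 < Q) by (rewrite HQ; pose proof (pow2_ge_0 (1 - g + l)); lra).
  assert (HS2 : sqrt Q ^ 2 = Q) by (rewrite <- Rsqr_pow2; apply Rsqr_sqrt; lra).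
  assert (Hp : p = (sqrt Q - (1 - g + l)) / (2 * g * l)) by (unfold p, mp_m; fold Q; field; lra).
  set (S := sqrt Q) in *.
  assert (HS : 1 - g + l < S).
  { assert (0 <= S) by apply sqrt_pos. nra. }
  split; [|split].
  - rewrite Hp. apply Rdiv_lt_0_compat; lra.
  - unfold mpA, mpB. rewrite Hp. field_simplify_eq; [|lra]. rewrite HS2, HQ. ring.
  - rewrite Hp. field. lra.
Qed.

Lemma mp_m_range (l : R) : 0 < l -> mp_range g (mp_m g (- l)).
Proof.
  intros Hl. destruct (mp_m_spec l Hl) as [Hp [HA _]].
  pose proof (mpB_pos g _ Hg (Rlt_le _ _ Hp)).
  split; [exact Hp|]. rewrite HA. apply Rmult_lt_0_compat; [apply Rmult_lt_0_compat|]; lra.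
Qed.

Lemma lam_of_mp_m (l : R) : 0 < l -> lam_of_m g (mp_m g (- l)) = l.
Proof.
  intros Hl. destruct (mp_m_spec l Hl) as [Hp [HA _]].
  pose proof (mpB_pos g _ Hg (Rlt_le _ _ Hp)).
  unfold lam_of_m. rewrite HA. field. split; lra.
Qed.

Lemma Derive_mp_m (l : R) : 0 < l ->
  let p := mp_m g (- l) in Derive (mp_m g) (- l) = (p * mpB g p) ^ 2 / mpE g p.
Proof.
  intros Hl p.
  destruct (mp_m_spec l Hl) as [Hp [HA HS]]. fold p in Hp, HA, HS.
  destruct (mp_m_range l Hl) as [_ HA0]. fold p in HA0.
  pose proof (mpB_pos g p Hg ltac:(lra)) as HB.
  pose proof (mpE_pos g p Hg ltac:(lra) ltac:(lra)) as HE.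
  rewrite (is_derive_unique _ _ _ (is_derive_mp_m (- l) ltac:(lra))). fold p. rewrite HS.
  assert (HSE : (1 - g + l + 2 * g * l * p) * (p * mpB g p) = mpE g p).
  { rewrite <- (lam_of_mp_m l Hl). fold p. unfold lam_of_m, mpE. unfold mpA, mpB in *.
    field. split; lra. }
  rewrite <- HSE. unfold mpB in *. field. split; [|split]; try lra.
  intros H0. rewrite H0, Rmult_0_l in HSE. lra.
Qed.

Lemma lam_of_m_pos (p : R) : mp_range g p -> 0 < lam_of_m g p.
Proof.
  intros [Hp HA]. pose proof (mpB_pos g p Hg ltac:(lra)).
  apply Rdiv_lt_0_compat; [lra|]. apply Rmult_lt_0_compat; lra.
Qed.

Lemma mp_m_lam_of_m (p : R) : mp_range g p -> mp_m g (- lam_of_m g p) = p.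
Proof.
  intros Hrange. pose proof Hrange as [Hp HA].
  pose proof (mpB_pos g p Hg ltac:(lra)) as HB.
  pose proof (lam_of_m_pos p Hrange) as Hl.
  set (l := lam_of_m g p) in *.
  assert (Hpl : mpA g p = l * p * mpB g p) by (unfold l, lam_of_m; field; lra).
  destruct (mp_m_spec l Hl) as [Hq [Hql _]].
  set (q := mp_m g (- l)) in *.
  (* p and q are positive roots of g l x^2 + (1 - g + l) x - 1, whose roots have product -1/(g l) *)
  destruct (Req_dec q p) as [|Hne]; [assumption|exfalso].
  unfold mpA, mpB in *.
  assert (Hsum : g * l * (q + p) + (1 - g + l) = 0).
  { apply (Rmult_eq_reg_l (q - p)); [|lra]. nra. }
  assert (0 < g * l * p * q)
    by (apply Rmult_lt_0_compat; [apply Rmult_lt_0_compat; [apply Rmult_lt_0_compat|]|]; lra).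
  nra.
Qed.

Lemma is_derive_lam_of_m (p : R) : 0 < p ->
  is_derive (lam_of_m g) p (- mpE g p / (p * mpB g p) ^ 2).
Proof.
  intros Hp. pose proof (mpB_pos g p Hg ltac:(lra)) as HB.
  unfold lam_of_m, mpA, mpE. unfold mpB in *.
  auto_derive; [repeat split; intros H; nra|]. field. split; lra.
Qed.

Lemma lam_of_m_deriv_neg (p : R) : 0 < p -> 0 <= mpA g p -> - mpE g p / (p * mpB g p) ^ 2 < 0.
Proof.
  intros Hp HA.
  pose proof (mpE_pos g p Hg ltac:(lra) HA). pose proof (mpB_pos g p Hg ltac:(lra)).
  assert (0 < (p * mpB g p) ^ 2) by (apply pow_lt; nra).
  assert (0 < mpE g p / (p * mpB g p) ^ 2) by (apply Rdiv_lt_0_compat; lra).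
  unfold Rdiv in *. lra.
Qed.

Lemma lam_of_m_decr (a b : R) : mp_range g a -> mp_range g b -> a < b ->
  lam_of_m g b < lam_of_m g a.
Proof.
  intros Ha Hb Hab.
  apply (derive_neg_strict_decr _ (fun p => - mpE g p / (p * mpB g p) ^ 2)); [exact Hab| |].
  - intros x Hx. apply is_derive_lam_of_m. destruct Ha. lra.
  - intros x Hx. destruct (mp_range_between g a b x Ha Hb ltac:(lra)).
    apply lam_of_m_deriv_neg; lra.
Qed.

Lemma mp_m_decr (l1 l2 : R) : 0 < l1 -> l1 < l2 -> mp_m g (- l2) < mp_m g (- l1).
Proof.
  intros Hl1 Hl12.
  pose proof (mp_m_range l1 Hl1) as R1. pose proof (mp_m_range l2 ltac:(lra)) as R2.
  pose proof (lam_of_mp_m l1 Hl1) as E1. pose proof (lam_of_mp_m l2 ltac:(lra)) as E2.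
  destruct (Rtotal_order (mp_m g (- l2)) (mp_m g (- l1))) as [|[Heq|Hgt]]; [assumption| |].
  - rewrite Heq in E2. lra.
  - pose proof (lam_of_m_decr _ _ R1 R2 Hgt). lra.
Qed.

End StieltjesTransform.

Definition crit_conf (g s p : R) : R :=
  mpB g p ^ 2 * (mpA g p - s * g * p * mpB g p) / mpE g p ^ 2.

Definition crit_P1 (g p : R) : R :=
  -1 - g + 3 * p * g * (1 - g) - 3 * p ^ 2 * g * (1 - g) ^ 2 - p ^ 3 * g ^ 2 * (1 - g) ^ 2.
Definition crit_P2 (g p : R) : R :=
  1 + 4 * p * g + 3 * p ^ 2 * g + 6 * p ^ 2 * g ^ 2 + 6 * p ^ 3 * g ^ 2 + 4 * p ^ 3 * g ^ 3
  + 3 * p ^ 4 * g ^ 3 + p ^ 4 * g ^ 4.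
Definition crit_conf_deriv (g s p : R) : R :=
  (mpB g p * crit_P1 g p - s * g * crit_P2 g p) / mpE g p ^ 3.

Lemma is_derive_crit_conf (g s p : R) : mpE g p <> 0 ->
  is_derive (crit_conf g s) p (crit_conf_deriv g s p).
Proof.
  intros HE. unfold crit_conf, crit_conf_deriv, crit_P1, crit_P2, mpA, mpB.
  unfold mpE in *. auto_derive; [repeat split; intros H; apply HE; nra|].
  field. exact HE.
Qed.

Lemma crit_P1_neg (g p : R) : 0 < g -> 0 <= p -> crit_P1 g p < 0.
Proof.
  intros Hg Hp. set (t := (1 - g) * p).
  replace (crit_P1 g p) with (-1 - g * (1 - 3 * t + 3 * t ^ 2) - g ^ 2 * p * t ^ 2)
    by (unfold crit_P1, t; ring).
  assert (0 < 1 - 3 * t + 3 * t ^ 2) by (pose proof (pow2_ge_0 (t - / 2)); nra).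
  assert (0 <= g ^ 2 * p * t ^ 2).
  { apply Rmult_le_pos; [apply Rmult_le_pos; [apply pow2_ge_0|lra]|apply pow2_ge_0]. }
  nra.
Qed.

Lemma crit_P2_pos (g p : R) : 0 < g -> 0 <= p -> 0 < crit_P2 g p.
Proof.
  intros Hg Hp. unfold crit_P2.
  assert (Hmon : forall i j, 0 <= p ^ i * g ^ j)
    by (intros; apply Rmult_le_pos; apply pow_le; lra).
  pose proof (Hmon 1%nat 1%nat). pose proof (Hmon 2%nat 1%nat). pose proof (Hmon 2%nat 2%nat).
  pose proof (Hmon 3%nat 2%nat). pose proof (Hmon 3%nat 3%nat). pose proof (Hmon 4%nat 3%nat).
  pose proof (Hmon 4%nat 4%nat). simpl in *. lra.
Qed.

Lemma crit_conf_deriv_neg (g s p : R) : 0 < g -> 0 < s -> 0 <= p -> 0 <= mpA g p ->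
  crit_conf_deriv g s p < 0.
Proof.
  intros Hg Hs Hp HA.
  pose proof (mpE_pos g p Hg Hp HA). pose proof (mpB_pos g p Hg Hp).
  pose proof (crit_P1_neg g p Hg Hp). pose proof (crit_P2_pos g p Hg Hp).
  assert (0 < s * g * crit_P2 g p) by (apply Rmult_lt_0_compat; [nra|lra]).
  assert (0 < mpB g p * - crit_P1 g p) by (apply Rmult_lt_0_compat; lra).
  unfold crit_conf_deriv, Rdiv. apply Rmult_neg_pos; [lra|].
  apply Rinv_0_lt_compat, pow_lt; lra.
Qed.

Lemma crit_conf_decr (g s a b : R) : 0 < g -> 0 < s -> 0 <= a -> a < b ->
  0 <= mpA g a -> 0 <= mpA g b -> crit_conf g s b < crit_conf g s a.
Proof.
  intros Hg Hs Ha Hab HAa HAb.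
  apply (derive_neg_strict_decr _ (crit_conf_deriv g s)); [exact Hab| |].
  - intros x Hx. apply is_derive_crit_conf.
    pose proof (mpE_pos g x Hg ltac:(lra) (mpA_between g a b x Hx HAa HAb)). lra.
  - intros x Hx. apply crit_conf_deriv_neg; [lra|lra|lra|].
    apply (mpA_between g a b); [lra|assumption|assumption].
Qed.

Lemma crit_conf_0 (g s : R) : crit_conf g s 0 = 1.
Proof. unfold crit_conf, mpA, mpB, mpE. field. Qed.

Lemma crit_conf_lt_1 (g s p : R) : 0 < g -> 0 < s -> mp_range g p -> crit_conf g s p < 1.
Proof.
  intros Hg Hs [Hp HA]. rewrite <- (crit_conf_0 g s).
  apply crit_conf_decr; try lra. unfold mpA; lra.
Qed.

Definition rho_val (g s : R) : R := - s * (g * Rmax 1 g / (1 - g) ^ 2).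

Lemma rho_inv_val (g s : R) : g <> 1 -> rho g (/ s) = Finite (rho_val g s).
Proof.
  intros Hg1. unfold rho, rho_val. destruct (Req_EM_T g 1); [contradiction|].
  now rewrite Rinv_inv.
Qed.

Definition rho_gap_poly (d p : R) : R :=
  1 + d + 4 * p + 8 * p * d + 3 * p * d ^ 2 + 4 * p ^ 2 + 14 * p ^ 2 * d + 13 * p ^ 2 * d ^ 2
  + 3 * p ^ 2 * d ^ 3 + 4 * p ^ 3 * d + 9 * p ^ 3 * d ^ 2 + 6 * p ^ 3 * d ^ 3 + p ^ 3 * d ^ 4.

Lemma rho_gap_poly_pos (d p : R) : 0 < d -> 0 <= p -> 0 < rho_gap_poly d p.
Proof.
  intros Hd Hp. unfold rho_gap_poly.
  assert (Hmon : forall i j, 0 <= p ^ i * d ^ j)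
    by (intros; apply Rmult_le_pos; apply pow_le; lra).
  pose proof (Hmon 1%nat 0%nat). pose proof (Hmon 1%nat 1%nat). pose proof (Hmon 1%nat 2%nat).
  pose proof (Hmon 2%nat 0%nat). pose proof (Hmon 2%nat 1%nat). pose proof (Hmon 2%nat 2%nat).
  pose proof (Hmon 2%nat 3%nat). pose proof (Hmon 3%nat 1%nat). pose proof (Hmon 3%nat 2%nat).
  pose proof (Hmon 3%nat 3%nat). pose proof (Hmon 3%nat 4%nat). simpl in *. lra.
Qed.

Section CriticalStrength.

Variables g s : R.
Hypotheses (Hg : 0 < g) (Hs : 0 < s).

Lemma crit_conf_lt1_edge : g < 1 ->
  crit_conf g s (/ (1 - g)) = rho_val g s /\ mpA g (/ (1 - g)) = 0.
Proof.
  intros Hg1. unfold crit_conf, rho_val, mpA, mpB, mpE.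
  rewrite Rmax_left by lra. split; field; lra.
Qed.

Lemma crit_conf_gt_rho (p : R) : g <> 1 -> mp_range g p -> rho_val g s < crit_conf g s p.
Proof.
  intros Hg1 [Hp HA].
  destruct (Rlt_or_le g 1) as [Hlt|Hge].
  - destruct (crit_conf_lt1_edge Hlt) as [Hedge HAedge].
    rewrite <- Hedge. apply crit_conf_decr; try lra.
    unfold mpA in HA. apply (Rmult_lt_reg_l (1 - g)); [lra|]. field_simplify; lra.
  - assert (Hgt : 1 < g) by lra.
    pose proof (mpB_pos g p Hg ltac:(lra)) as HB.
    pose proof (mpE_pos g p Hg ltac:(lra) ltac:(lra)) as HE.
    assert (HT : g * mpE g p ^ 2 - (1 - g) ^ 2 * p * mpB g p ^ 3 = rho_gap_poly (g - 1) p)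
      by (unfold mpE, mpB, rho_gap_poly; ring).
    assert (Hdiff : crit_conf g s p - rho_val g s =
      ((g - 1) ^ 2 * mpA g p * mpB g p ^ 2 + s * g * rho_gap_poly (g - 1) p)
      / ((g - 1) ^ 2 * mpE g p ^ 2)).
    { rewrite <- HT. unfold crit_conf, rho_val. rewrite Rmax_right by lra.
      unfold mpA, mpB, mpE in *. field. split; lra. }
    assert (0 < (g - 1) ^ 2) by (apply pow_lt; lra).
    assert (0 < (g - 1) ^ 2 * mpA g p * mpB g p ^ 2)
      by (apply Rmult_lt_0_compat; [apply Rmult_lt_0_compat|apply pow_lt]; lra).
    assert (0 < s * g * rho_gap_poly (g - 1) p)
      by (apply Rmult_lt_0_compat; [nra|apply rho_gap_poly_pos; lra]).
    assert (0 < (g - 1) ^ 2 * mpE g p ^ 2) by (apply Rmult_lt_0_compat; [|apply pow_lt]; lra).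
    assert (0 < ((g - 1) ^ 2 * mpA g p * mpB g p ^ 2 + s * g * rho_gap_poly (g - 1) p)
                / ((g - 1) ^ 2 * mpE g p ^ 2)) by (apply Rdiv_lt_0_compat; lra).
    lra.
Qed.

(* crit_conf at p = 1 / u; for g > 1 its continuity at u = 0 says crit_conf -> rho as p -> oo. *)
Definition crit_conf_recip (u : R) : R :=
  (u + g) ^ 2 * (u * (u + (g - 1)) - s * g * (u + g)) / (u ^ 2 + 2 * g * u + g * (g - 1)) ^ 2.

Lemma crit_conf_recip_eq (u : R) : 1 < g -> 0 < u -> crit_conf g s (/ u) = crit_conf_recip u.
Proof.
  intros Hg1 Hu. unfold crit_conf, crit_conf_recip, mpA, mpB, mpE.
  assert (0 < u ^ 2 + 2 * g * u + g * (g - 1)).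
  { assert (0 < u ^ 2) by (apply pow_lt; lra). nra. }
  field. split; lra.
Qed.

Lemma crit_conf_recip_0 : 1 < g -> crit_conf_recip 0 = rho_val g s.
Proof.
  intros Hg1. unfold crit_conf_recip, rho_val. rewrite Rmax_right by lra. field. split; lra.
Qed.

Lemma continuity_pt_crit_conf_recip_0 : 1 < g -> continuity_pt crit_conf_recip 0.
Proof.
  intros Hg1. apply (is_derive_continuity_pt _ _ (Derive crit_conf_recip 0)), Derive_correct.
  assert (0 < g * (g - 1)) by nra.
  unfold crit_conf_recip. auto_derive. apply Rgt_not_eq. nra.
Qed.

Lemma crit_conf_reaches (z : R) : Rbar_lt (rho g (/ s)) z -> z < 1 ->
  exists q, 0 < q /\ 0 <= mpA g q /\ crit_conf g s q < z.
Proof.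
  intros Hz Hz1. destruct (Rtotal_order g 1) as [Hlt|[Heq|Hgt]].
  - rewrite rho_inv_val in Hz by lra.
    destruct (crit_conf_lt1_edge Hlt) as [Hedge HAedge].
    exists (/ (1 - g)). rewrite Hedge, HAedge. split; [apply Rinv_0_lt_compat; lra|].
    simpl in Hz. lra.
  - subst g. set (q := 4 * (1 - z) / s + 4 + 4 / s).
    (* for g = 1, crit_conf q <= 1 - s q / 4, which this q makes equal to z - s - 1 *)
    assert (Hsq : s * q = 4 * (1 - z) + 4 * s + 4) by (unfold q; field; lra).
    assert (Hq : 0 < q) by nra.
    assert (Hden : 0 < (1 + 2 * q) ^ 2) by (apply pow_lt; lra).
    assert (Hcrit : crit_conf 1 s q * (1 + 2 * q) ^ 2 = (1 + q) ^ 2 - s * q * (1 + q) ^ 3)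
      by (unfold crit_conf, mpA, mpB, mpE; field; lra).
    assert (Hbound : crit_conf 1 s q <= 1 - s * q / 4).
    { apply (Rmult_le_reg_r ((1 + 2 * q) ^ 2)); [lra|]. rewrite Hcrit.
      assert ((1 + q) ^ 2 <= (1 + 2 * q) ^ 2) by (apply pow_incr; lra).
      assert ((1 + 2 * q) ^ 2 <= 4 * (1 + q) ^ 3) by (simpl; nra).
      nra. }
    exists q. unfold mpA. split; [lra|split; [lra|]]. lra.
  - rewrite rho_inv_val in Hz by lra. simpl in Hz.
    destruct (continuity_pt_crit_conf_recip_0 Hgt (z - rho_val g s) ltac:(lra))
      as [del [Hdel Hnear]].
    set (u := del / 2).
    assert (Hu : 0 < u) by (unfold u; lra).
    specialize (Hnear u). simpl in Hnear. unfold R_dist, D_x, no_cond in Hnear.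
    rewrite crit_conf_recip_0 in Hnear by lra.
    assert (Hclose : Rabs (crit_conf_recip u - rho_val g s) < z - rho_val g s).
    { apply Hnear. split; [split; [auto|lra]|]. rewrite Rminus_0_r, Rabs_pos_eq; unfold u; lra. }
    apply Rabs_def2 in Hclose.
    exists (/ u). rewrite crit_conf_recip_eq by lra.
    assert (0 < / u) by (apply Rinv_0_lt_compat; lra).
    unfold mpA. split; [lra|split; [nra|lra]].
Qed.

Definition intermediate_strength (z : R) : Prop := Rbar_lt (rho g (/ s)) z /\ z < 1.

Lemma crit_conf_surj (z : R) : intermediate_strength z ->
  exists p, mp_range g p /\ crit_conf g s p = z.
Proof.
  intros [Hz Hz1].
  destruct (crit_conf_reaches z Hz Hz1) as [q [Hq [HAq Hcq]]].
  assert (HA0 : 0 <= mpA g 0) by (unfold mpA; lra).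
  assert (Hcont : forall x, 0 <= x <= q -> continuity_pt (fun p => z - crit_conf g s p) x).
  { intros x Hx. apply continuity_pt_minus; [apply continuity_pt_const; now intros ? ?|].
    apply (is_derive_continuity_pt _ _ (crit_conf_deriv g s x)), is_derive_crit_conf.
    pose proof (mpE_pos g x Hg ltac:(lra) (mpA_between g 0 q x Hx HA0 HAq)). lra. }
  destruct (IVT_interv _ 0 q Hcont Hq) as [x [Hx Hzx]];
    [rewrite crit_conf_0; lra|lra|].
  assert (Hx0 : x <> 0) by (intros ->; rewrite crit_conf_0 in Hzx; lra).
  assert (Hxq : x <> q) by (intros ->; lra).
  exists x. split; [split; [lra|]|lra].
  unfold mpA in *. destruct (Rle_or_lt (1 - g) 0); nra.
Qed.

Definition crit_conf_inv (z : R) : R :=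
  epsilon (inhabits 0) (fun p => mp_range g p /\ crit_conf g s p = z).

Lemma crit_conf_inv_spec (z : R) : intermediate_strength z ->
  mp_range g (crit_conf_inv z) /\ crit_conf g s (crit_conf_inv z) = z.
Proof. intros Hz. unfold crit_conf_inv. apply epsilon_spec, crit_conf_surj, Hz. Qed.

Lemma crit_conf_inv_decr (z1 z2 : R) : intermediate_strength z1 -> intermediate_strength z2 ->
  z1 < z2 -> crit_conf_inv z2 < crit_conf_inv z1.
Proof.
  intros H1 H2 H12.
  destruct (crit_conf_inv_spec z1 H1) as [[P1 A1] Z1].
  destruct (crit_conf_inv_spec z2 H2) as [[P2 A2] Z2].
  destruct (Rtotal_order (crit_conf_inv z2) (crit_conf_inv z1)) as [|[He|Hlt]]; [assumption|exfalso|exfalso].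
  - rewrite He in Z2. lra.
  - pose proof (crit_conf_decr g s (crit_conf_inv z1) (crit_conf_inv z2) Hg Hs ltac:(lra) Hlt ltac:(lra) ltac:(lra)). lra.
Qed.

Lemma crit_conf_inv_le (z1 z2 : R) : intermediate_strength z1 -> intermediate_strength z2 ->
  z1 <= z2 -> crit_conf_inv z2 <= crit_conf_inv z1.
Proof.
  intros H1 H2 [H12|Heq]; [left; now apply crit_conf_inv_decr|right; now rewrite Heq].
Qed.

Lemma intermediate_strength_between (z1 z2 z : R) :
  intermediate_strength z1 -> intermediate_strength z2 -> z1 <= z <= z2 ->
  intermediate_strength z.
Proof.
  intros [H1 _] [_ H2] Hz. split; [|lra].
  apply (Rbar_lt_le_trans _ _ _ H1). simpl. lra.
Qed.

Lemma intermediate_strength_open (z : R) : intermediate_strength z ->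
  exists z1 z2, intermediate_strength z1 /\ intermediate_strength z2 /\ z1 < z < z2.
Proof.
  intros [Hz Hz1].
  assert (Hz2 : intermediate_strength ((z + 1) / 2)).
  { split; [|lra]. apply (Rbar_lt_le_trans _ _ _ Hz). simpl. lra. }
  destruct (rho g (/ s)) as [v| |] eqn:Hrho; simpl in Hz; [|contradiction|].
  - exists ((v + z) / 2), ((z + 1) / 2).
    split; [split; [rewrite Hrho; simpl; lra|lra]|split; [exact Hz2|lra]].
  - exists (z - 1), ((z + 1) / 2).
    split; [split; [now rewrite Hrho|lra]|split; [exact Hz2|lra]].
Qed.

Lemma is_derive_crit_conf_inv (z : R) : intermediate_strength z ->
  is_derive crit_conf_inv z (1 / crit_conf_deriv g s (crit_conf_inv z)).
Proof.
  intros Hz. destruct (intermediate_strength_open z Hz) as [z1 [z2 [Hz1 [Hz2 Hz12]]]].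
  destruct (crit_conf_inv_spec z1 Hz1) as [R1 Z1].
  destruct (crit_conf_inv_spec z2 Hz2) as [R2 Z2].
  set (p1 := crit_conf_inv z1) in *. set (p2 := crit_conf_inv z2) in *.
  assert (Hp21 : p2 < p1) by (apply crit_conf_inv_decr; auto; lra).
  assert (Hrange : forall x, p2 <= x <= p1 -> mp_range g x)
    by (intros x Hx; exact (mp_range_between g p2 p1 x R2 R1 Hx)).
  apply (is_derive_inverse_decr (crit_conf g s) crit_conf_inv (crit_conf_deriv g s) p2 p1); [exact Hp21| | | |rewrite Z1, Z2; lra|].
  - intros x Hx. destruct (Hrange x Hx) as [Hx0 HAx].
    apply is_derive_crit_conf. pose proof (mpE_pos g x Hg ltac:(lra) ltac:(lra)). lra.
  - intros x1 x2 H1 H12 H2. destruct (Hrange x1 ltac:(lra)), (Hrange x2 ltac:(lra)).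
    apply crit_conf_decr; lra.
  - rewrite Z1, Z2. intros y Hy.
    assert (Hy' : intermediate_strength y) by exact (intermediate_strength_between z1 z2 y Hz1 Hz2 Hy).
    destruct (crit_conf_inv_spec y Hy') as [_ Zy]. split; [|exact Zy].
    split; apply crit_conf_inv_le; auto; lra.
  - destruct (crit_conf_inv_spec z Hz) as [[Hp HA] _].
    apply Rlt_not_eq, crit_conf_deriv_neg; lra.
Qed.

Definition lam_C (z : R) : R := lam_of_m g (crit_conf_inv z).

Lemma lam_C_pos_derive_pos (z : R) : intermediate_strength z ->
  0 < lam_C z /\ ex_derive lam_C z /\ 0 < Derive lam_C z.
Proof.
  intros Hz. destruct (crit_conf_inv_spec z Hz) as [Hrange _].
  set (p := crit_conf_inv z) in *. pose proof Hrange as [Hp HA].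
  pose proof (is_derive_comp (lam_of_m g) crit_conf_inv z _ _
    (is_derive_lam_of_m g Hg p Hp) (is_derive_crit_conf_inv z Hz)) as Hd.
  fold p in Hd.
  assert (Hdc : crit_conf_deriv g s p < 0) by (apply crit_conf_deriv_neg; lra).
  assert (Hdl : - mpE g p / (p * mpB g p) ^ 2 < 0) by (apply lam_of_m_deriv_neg; lra).
  split; [exact (lam_of_m_pos g Hg p Hrange)|split; [eexists; exact Hd|]].
  rewrite (is_derive_unique lam_C z _ Hd).
  change (0 < (1 / crit_conf_deriv g s p) * (- mpE g p / (p * mpB g p) ^ 2)).
  assert (1 / crit_conf_deriv g s p < 0)
    by (unfold Rdiv; rewrite Rmult_1_l; apply Rinv_lt_0_compat, Hdc).
  nra.
Qed.

End CriticalStrength.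

Definition risk_m (rt2 st2 om2 eta g p : R) : R :=
  om2 + rt2 * (mpA g p ^ 2 / mpE g p) - 2 * (om2 + eta) * (mpA g p / mpB g p)
  + st2 * g * (p ^ 2 / mpE g p) + st2 + om2.

Section CausalRisk.

Variables rt2 st2 om2 eta g : R.
Hypotheses (Hr : 0 < rt2) (Hs : 0 < st2) (Hg : 0 < g).

Let s := st2 / rt2.
Let zeta := conf_strength rt2 om2 eta.
Let risk := causal_risk rt2 st2 om2 eta g.
Let Phi := risk_m rt2 st2 om2 eta g.

Lemma causal_risk_m (l : R) : 0 < l -> risk l = Phi (mp_m g (- l)).
Proof.
  intros Hl. unfold risk, Phi, causal_risk, risk_m.
  rewrite (Derive_mp_m g Hg l Hl).
  pose proof (lam_of_mp_m g Hg l Hl) as El.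
  destruct (mp_m_range g Hg l Hl) as [Hp HA]. set (p := mp_m g (- l)) in *.
  rewrite <- El.
  pose proof (mpB_pos g p Hg ltac:(lra)). pose proof (mpE_pos g p Hg ltac:(lra) ltac:(lra)).
  unfold lam_of_m, mpA, mpB, mpE in *. field. repeat split; lra.
Qed.

Lemma is_derive_risk_m (p : R) : mp_range g p ->
  is_derive Phi p (2 * rt2 / mpB g p ^ 2 * (zeta - crit_conf g s p)).
Proof.
  intros [Hp HA].
  pose proof (mpB_pos g p Hg ltac:(lra)). pose proof (mpE_pos g p Hg ltac:(lra) ltac:(lra)).
  unfold Phi, risk_m, zeta, conf_strength, s, crit_conf, mpA. unfold mpB, mpE in *.
  auto_derive; [repeat split; lra|]. field. repeat split; lra.
Qed.

Lemma risk_m_decr_on (a b : R) : mp_range g a -> mp_range g b -> a < b ->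
  (forall x, a < x < b -> zeta < crit_conf g s x) -> Phi b < Phi a.
Proof.
  intros Ha Hb Hab Hcrit.
  apply (derive_neg_strict_decr _ (fun p => 2 * rt2 / mpB g p ^ 2 * (zeta - crit_conf g s p)) a b Hab).
  - intros x Hx. apply is_derive_risk_m, (mp_range_between g a b); assumption.
  - intros x Hx. specialize (Hcrit x Hx). destruct (mp_range_between g a b x Ha Hb ltac:(lra)).
    assert (0 < 2 * rt2 / mpB g x ^ 2)
      by (apply Rdiv_lt_0_compat; [lra|apply pow_lt, mpB_pos; lra]).
    nra.
Qed.

Lemma risk_m_incr_on (a b : R) : mp_range g a -> mp_range g b -> a < b ->
  (forall x, a < x < b -> crit_conf g s x < zeta) -> Phi a < Phi b.
Proof.
  intros Ha Hb Hab Hcrit.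
  apply (derive_pos_strict_incr _ (fun p => 2 * rt2 / mpB g p ^ 2 * (zeta - crit_conf g s p)) a b Hab).
  - intros x Hx. apply is_derive_risk_m, (mp_range_between g a b); assumption.
  - intros x Hx. specialize (Hcrit x Hx). destruct (mp_range_between g a b x Ha Hb ltac:(lra)).
    assert (0 < 2 * rt2 / mpB g x ^ 2)
      by (apply Rdiv_lt_0_compat; [lra|apply pow_lt, mpB_pos; lra]).
    nra.
Qed.

Lemma risk_m_lb (p : R) : mp_range g p -> om2 - 2 * Rabs (om2 + eta) + st2 + om2 <= Phi p.
Proof.
  intros [Hp HA]. unfold Phi, risk_m.
  pose proof (mpE_pos g p Hg ltac:(lra) ltac:(lra)) as HE.
  pose proof (mpB_pos g p Hg ltac:(lra)) as HB.
  assert (0 <= rt2 * (mpA g p ^ 2 / mpE g p))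
    by (apply Rmult_le_pos; [lra|apply Rdiv_le_0_compat; [apply pow2_ge_0|lra]]).
  assert (0 <= st2 * g * (p ^ 2 / mpE g p))
    by (apply Rmult_le_pos; [nra|apply Rdiv_le_0_compat; [apply pow2_ge_0|lra]]).
  assert (Hratio : 0 <= mpA g p / mpB g p <= 1).
  { split; [apply Rdiv_le_0_compat; lra|].
    apply (Rmult_le_reg_r (mpB g p)); [exact HB|].
    unfold Rdiv. rewrite Rmult_assoc, Rinv_l, Rmult_1_r, Rmult_1_l by lra.
    unfold mpA, mpB. lra. }
  assert ((om2 + eta) * (mpA g p / mpB g p) <= Rabs (om2 + eta)).
  { destruct (Rle_or_lt 0 (om2 + eta)).
    - rewrite Rabs_pos_eq by lra. nra.
    - rewrite Rabs_left by lra. nra. }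
  lra.
Qed.

Lemma causal_risk_lb (l : R) : 0 < l -> om2 - 2 * Rabs (om2 + eta) + st2 + om2 <= risk l.
Proof. intros Hl. rewrite causal_risk_m by exact Hl. apply risk_m_lb, mp_m_range; assumption. Qed.

Lemma causal_risk_incr : (forall p, mp_range g p -> zeta < crit_conf g s p) ->
  forall l1 l2, 0 < l1 -> l1 < l2 -> risk l1 < risk l2.
Proof.
  intros Hcrit l1 l2 Hl1 Hl12. rewrite !causal_risk_m by lra.
  pose proof (mp_m_range g Hg l1 Hl1). pose proof (mp_m_range g Hg l2 ltac:(lra)).
  apply risk_m_decr_on; [assumption|assumption|apply mp_m_decr; assumption|].
  intros x Hx. apply Hcrit, (mp_range_between g (mp_m g (- l2)) (mp_m g (- l1))); auto; lra.
Qed.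

Lemma causal_risk_decr : (forall p, mp_range g p -> crit_conf g s p < zeta) ->
  forall l1 l2, 0 < l1 -> l1 < l2 -> risk l2 < risk l1.
Proof.
  intros Hcrit l1 l2 Hl1 Hl12. rewrite !causal_risk_m by lra.
  pose proof (mp_m_range g Hg l1 Hl1). pose proof (mp_m_range g Hg l2 ltac:(lra)).
  apply risk_m_incr_on; [assumption|assumption|apply mp_m_decr; assumption|].
  intros x Hx. apply Hcrit, (mp_range_between g (mp_m g (- l2)) (mp_m g (- l1))); auto; lra.
Qed.

Lemma risk_m_strict_min (p q : R) : mp_range g p -> mp_range g q ->
  crit_conf g s p = zeta -> q <> p -> Phi p < Phi q.
Proof.
  intros Hp Hq Hcp Hne. pose proof (Rdiv_lt_0_compat st2 rt2 Hs Hr) as Hs'.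
  destruct (Rtotal_order q p) as [Hlt|[|Hlt]]; [|contradiction|].
  - apply risk_m_decr_on; [assumption|assumption|assumption|].
    intros x Hx. rewrite <- Hcp. destruct (mp_range_between g q p x Hq Hp ltac:(lra)).
    apply crit_conf_decr; [lra|exact Hs'|lra|lra|lra|destruct Hp; lra].
  - apply risk_m_incr_on; [assumption|assumption|assumption|].
    intros x Hx. rewrite <- Hcp. destruct (mp_range_between g p q x Hp Hq ltac:(lra)).
    apply crit_conf_decr; [lra|exact Hs'|destruct Hp; lra|lra|destruct Hp; lra|lra].
Qed.

Lemma opt_causal_reg_zero : Rbar_le zeta (rho g (/ s)) ->
  opt_causal_reg rt2 st2 om2 eta g (Finite 0).
Proof.
  intros Hle. unfold opt_causal_reg, is_opt_reg.
  destruct (Req_EM_T 0 0) as [_|H00]; [|contradiction].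
  destruct (Req_EM_T g 1) as [Hg1|Hg1].
  { subst g. unfold rho in Hle. destruct (Req_EM_T 1 1); [contradiction|congruence]. }
  rewrite rho_inv_val in Hle by exact Hg1. simpl in Hle.
  apply (incr_bounded_lim_at_right0 _ (om2 - 2 * Rabs (om2 + eta) + st2 + om2)).
  - apply causal_risk_incr. intros p Hp.
    pose proof (crit_conf_gt_rho g s Hg (Rdiv_lt_0_compat _ _ Hs Hr) p Hg1 Hp). lra.
  - exact causal_risk_lb.
Qed.

Lemma opt_causal_reg_infty : 1 <= zeta -> opt_causal_reg rt2 st2 om2 eta g p_infty.
Proof.
  intros H1. apply (decr_bounded_lim_at_infty _ (om2 - 2 * Rabs (om2 + eta) + st2 + om2)).
  - apply causal_risk_decr. intros p Hp.
    pose proof (crit_conf_lt_1 g s p Hg (Rdiv_lt_0_compat _ _ Hs Hr) Hp). lra.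
  - exact causal_risk_lb.
Qed.

Lemma opt_causal_reg_interior : intermediate_strength g s zeta ->
  opt_causal_reg rt2 st2 om2 eta g (Finite (lam_C g s zeta)).
Proof.
  intros Hz. pose proof (Rdiv_lt_0_compat _ _ Hs Hr) as Hs'.
  destruct (lam_C_pos_derive_pos g s Hg Hs' zeta Hz) as [Hpos _].
  destruct (crit_conf_inv_spec g s Hg Hs' zeta Hz) as [Hrange Hcrit].
  unfold opt_causal_reg, is_opt_reg.
  destruct (Req_EM_T (lam_C g s zeta) 0) as [H0|_]; [lra|].
  unfold lam_C in *. set (ps := crit_conf_inv g s zeta) in *.
  assert (Hrisk_ps : risk (lam_of_m g ps) = Phi ps)
    by (rewrite causal_risk_m, mp_m_lam_of_m by assumption; reflexivity).
  split; [exact Hpos|split].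
  - intros mu Hmu. fold risk. rewrite Hrisk_ps, causal_risk_m by exact Hmu.
    destruct (Req_dec (mp_m g (- mu)) ps) as [->|Hne]; [lra|].
    left. apply risk_m_strict_min; auto using mp_m_range.
  - intros mu Hmu Hmin. fold risk in Hmin.
    specialize (Hmin (lam_of_m g ps) Hpos).
    rewrite Hrisk_ps, causal_risk_m in Hmin by exact Hmu.
    rewrite <- (lam_of_mp_m g Hg mu Hmu).
    destruct (Req_dec (mp_m g (- mu)) ps) as [->|Hne]; [reflexivity|exfalso].
    pose proof (risk_m_strict_min ps (mp_m g (- mu)) Hrange (mp_m_range g Hg mu Hmu) Hcrit Hne).
    lra.
Qed.

End CausalRisk.

Theorem theorem4 (rt2 st2 g : R) :
  0 < rt2 -> 0 < st2 -> 0 < g ->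
  (forall om2 eta : R, admissible rt2 om2 eta ->
     Rbar_le (Finite (conf_strength rt2 om2 eta)) (rho g (snr_stat rt2 st2)) ->
     opt_causal_reg rt2 st2 om2 eta g (Finite 0)) /\
  (exists L : R -> R,
     (forall z : R, Rbar_lt (rho g (snr_stat rt2 st2)) (Finite z) -> z < 1 ->
        0 < L z /\ ex_derive L z /\ 0 < Derive L z) /\
     (forall om2 eta : R, admissible rt2 om2 eta ->
        Rbar_lt (rho g (snr_stat rt2 st2)) (Finite (conf_strength rt2 om2 eta)) ->
        conf_strength rt2 om2 eta < 1 ->
        opt_causal_reg rt2 st2 om2 eta g (Finite (L (conf_strength rt2 om2 eta))))) /\
  (forall om2 eta : R, admissible rt2 om2 eta ->
     1 <= conf_strength rt2 om2 eta ->
     opt_causal_reg rt2 st2 om2 eta g p_infty).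
Proof.
  intros Hr Hs Hg.
  assert (Hsnr : snr_stat rt2 st2 = / (st2 / rt2)) by (unfold snr_stat; now rewrite Rinv_div).
  rewrite Hsnr.
  split; [|split].
  - intros om2 eta _. exact (opt_causal_reg_zero rt2 st2 om2 eta g Hr Hs Hg).
  - exists (lam_C g (st2 / rt2)). split.
    + intros z Hz Hz1.
      apply lam_C_pos_derive_pos; [exact Hg|apply Rdiv_lt_0_compat; lra|split; assumption].
    + intros om2 eta _ Hz Hz1.
      apply opt_causal_reg_interior; [exact Hr|exact Hs|exact Hg|split; assumption].
  - intros om2 eta _. exact (opt_causal_reg_infty rt2 st2 om2 eta g Hr Hs Hg).
Qed.
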